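(* Let $W$ be the Weyl group of a connected reductive group $G$ over $\mathbb{C}$ with respect to a maximal torus $T$, acting on $\mathfrak{t}^*$ by the dot action $w\bullet\lambda=w(\lambda+\rho)-\rho$. Let $\mu_0,\dots,\mu_m\in\mathfrak{t}^*$ and let $\mathfrak{z}_0,\dots,\mathfrak{z}_m\subseteq\mathfrak{t}^*$ be vector subspaces. If $(\mu_0+\mathfrak{z}_0)/(W,\bullet)\subseteq\bigcup_{i=1}^m(\mu_i+\mathfrak{z}_i)/(W,\bullet)$, then there exist $1\le i_0\le m$ and $w_0\in W$ such that $\mathfrak{z}_0\subseteq w_0(\mathfrak{z}_{i_0})$.
   Context: $\rho\in\mathfrak{t}^*$ satisfies $\rho(h_\alpha)=1$ for all simple roots $\alpha$. For $V\subseteq\mathfrak{t}^*$, $V/(W,\bullet)$ denotes the image of $V$ under the quotient map $\mathfrak{t}^*\to\mathfrak{t}^*/(W,\bullet)$. *)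

(* t^* of a connected reductive group over C is modelled via
   its root datum (X^*(T) = Z^n, X_*(T) = Z^n, roots, coroots), t^* = C^n. *)
From Stdlib Require Import Reals.
From mathcomp Require Import all_boot all_algebra.
From mathcomp Require Import complex.
From mathcomp Require Import Rstruct.

Set Implicit Arguments.
Unset Strict Implicit.
Unset Printing Implicit Defensive.

Import GRing.Theory Num.Theory.
Local Open Scope ring_scope.

Definition C : fieldType := complex R.

(* Perfect pairing X^*(T) x X_*(T) -> Z, characters and cocharacters as rows. *)
Definition dotz (n : nat) (x y : 'rV[int]_n) : int := \sum_(k < n) x 0 k * y 0 k.

Definition pairC (n : nat) (x y : 'rV[C]_n) : C := \sum_(k < n) x 0 k * y 0 k.

Definition reflZ (n : nat) (a ac x : 'rV[int]_n) : 'rV[int]_n := x - (dotz x ac) *: a.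

(* Reduced root datum (X^*, roots rt, X_*, coroots crt), alpha_i^v = crt`_i.
   These are exactly the root data of connected reductive groups over C. *)
Definition is_root_datum (n : nat) (rt crt : seq 'rV[int]_n) : Prop :=
  [/\ size rt = size crt, uniq rt, uniq crt,
      (forall i : nat, (i < size rt)%N -> dotz rt`_i crt`_i = 2) &
   [/\
      (forall i j : nat, (i < size rt)%N -> (j < size rt)%N -> reflZ rt`_i crt`_i rt`_j \in rt),
       (forall i j : nat, (i < size rt)%N -> (j < size rt)%N -> reflZ crt`_i rt`_i crt`_j \in crt)
    & (forall i : nat, (i < size rt)%N -> 2%:Z *: rt`_i \notin rt)]].

Definition intmx (n : nat) (x : 'rV[int]_n) : 'rV[C]_n := map_mx (fun z : int => z%:~R) x.

Definition reflM (n : nat) (a ac : 'rV[int]_n) : 'M[C]_n :=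
  1%:M - (intmx ac)^T *m intmx a.

(* The Weyl group, as the group of linear maps of t^* generated by the
   simple/root reflections (acting on the right on row vectors). *)
Inductive weyl (n : nat) (rt crt : seq 'rV[int]_n) : 'M[C]_n -> Prop :=
| weyl1 : weyl rt crt 1%:M
| weylS i w : (i < size rt)%N -> weyl rt crt w -> weyl rt crt (reflM rt`_i crt`_i *m w).

Definition is_base (n : nat) (rt : seq 'rV[int]_n) (D : seq nat) : Prop :=
  [/\ uniq D, all (fun k => (k < size rt)%N) D,
      free [seq intmx rt`_k | k <- D]
    & forall j : nat, (j < size rt)%N -> exists c : nat -> int,
        rt`_j = \sum_(k <- D) c k *: rt`_k /\
        ((forall k, k \in D -> 0 <= c k) \/ (forall k, k \in D -> c k <= 0))].

Definition dotact (n : nat) (rho : 'rV[C]_n) (w : 'M[C]_n) (lam : 'rV[C]_n) : 'rV[C]_n :=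
  (lam + rho) *m w - rho.

From mathcomp Require Import all_boot all_algebra complex.
From mathcomp Require Import boolp classical_sets cardinality reals constructive_ereal.
From mathcomp Require Import measure lebesgue_measure Rstruct.

Set Implicit Arguments.
Unset Strict Implicit.
Unset Printing Implicit Defensive.

Import GRing.Theory Num.Theory.
Local Open Scope ring_scope.

(* Each set w.(mu_i + z_i) is the affine subspace (w.mu_i) + w(z_i).  If z_0 lay
   in no linear space w(z_i), each of these affine subspaces would meet the
   moment curve t |-> sum_k t^(k+1) b_k, b a basis of z_0, in the finitely many
   zeros of a nonzero polynomial in t.  As W is countable, countably many finite
   sets would then cover the uncountable field C. *)

Lemma realType_uncountable (R : realType) : ~ countable [set: R].
Proof.
move=> /countable_lebesgue_measure0 R0.
have : (lebesgue_measure [set` `[0%R, 1%R]%R] <= lebesgue_measure [set: R])%E.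
  by apply: le_measure; rewrite ?inE.
by rewrite lebesgue_measure_itv R0 /= lte_fin ltr01 oppr0 adde0 lee_fin ler10.
Qed.

Lemma complex_uncountable (R : realType) : ~ countable [set: R[i]].
Proof.
move=> /countable_injP[f injf]; apply: (@realType_uncountable R).
apply/countable_injP; exists (f \o (fun x => Complex x 0)) => x y _ _ /injf.
by rewrite !inE => /(_ I I) [].
Qed.

Lemma finite_poly_roots (F : idomainType) (p : {poly F}) :
  p != 0 -> finite_set [set x | root p x].
Proof.
move: {2}(size p) (leqnn (size p)) => k; elim: k p => [|k IHk] p.
  by rewrite leqn0 size_poly_eq0 => /eqP->; rewrite eqxx.
move=> size_p p_neq0.
have [[a pa0]|no_root] := pselect (exists a, root p a); last first.
  rewrite (_ : [set x | _] = set0)%classic //.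
  by apply/seteqP; split=> x //= px; apply: no_root; exists x.
have [q def_p] := factor_theorem p a pa0.
have q_neq0 : q != 0 by apply: contraNneq p_neq0; rewrite def_p => ->; rewrite mul0r.
have size_q : (size q <= k)%N.
  by move: size_p; rewrite def_p size_mul ?polyXsubC_eq0 // size_XsubC addn2.
rewrite (_ : [set x | _] = a |` [set x | root q x])%classic.
  by rewrite finite_setU; split; last exact: IHk.
apply/seteqP; split=> x /=; rewrite def_p rootM root_XsubC.
  by case/orP=> [|/eqP]; [right | left].
by case=> [->|->]; rewrite ?eqxx ?orbT.
Qed.

Section AffineCover.
Variables (F : fieldType) (vT : vectType F).

Lemma separating_scalar (U : {vspace vT}) v :
  v \notin U -> exists2 f : {scalar vT}, {in U, forall u, f u = 0} & f v != 0.
Proof.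
move=> vNU; pose P : 'End(vT) := (\1 - projv U)%VF.
have P_def u : P u = u - projv U u by rewrite !lfunE /= !lfunE.
have PU u : u \in U -> P u = 0 by move=> uU; rewrite P_def projv_id ?subrr.
have Pv_neq0 : P v != 0.
  by apply: contraNneq vNU; rewrite P_def => /subr0_eq ->; apply: memv_proj.
have [i Pv_i] : exists i, coord (vbasis fullv) i (P v) != 0.
  apply/existsP; apply: contraNT Pv_neq0; rewrite negb_exists => /forallP c0.
  apply/eqP; rewrite (coord_vbasis (memvf (P v))) big1 // => j _.
  by rewrite (eqP (negbNE (c0 j))) scale0r.
by exists (coord (vbasis fullv) i \o P) => // u /PU /= ->; rewrite linear0.
Qed.

Definition moment_curve (b : seq vT) (t : F) : vT := \sum_(k < size b) t ^+ k.+1 *: b`_k.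

Lemma moment_curve_mem (Z : {vspace vT}) b t :
  {subset b <= Z} -> moment_curve b t \in Z.
Proof. by move=> bZ; apply: memv_suml => k _; apply/memvZ/bZ/mem_nth. Qed.

Lemma scalar_moment_curve (f : {scalar vT}) b c t :
  f (moment_curve b t - c) =
    (\poly_(k < (size b).+1) if k is k'.+1 then f b`_k' else - f c).[t].
Proof.
rewrite horner_poly big_ord_recl /= expr0 mulr1 linearB linear_sum /= addrC.
by congr (_ + _); apply: eq_bigr => k _; rewrite linearZ /= mulrC.
Qed.

Lemma finite_moment_curve_meet b (U : {vspace vT}) c v :
  v \in b -> v \notin U -> finite_set [set t | moment_curve b t - c \in U]%classic.
Proof.
move=> vb vNU; have [f fU fv] := separating_scalar vNU.
pose p := \poly_(k < (size b).+1) if k is k'.+1 then f b`_k' else - f c.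
have p_neq0 : p != 0.
  apply: contra_neq fv => p0; have := congr1 (fun q : {poly F} => q`_(index v b).+1) p0.
  by rewrite coef_poly ltnS index_mem vb nth_index // coef0.
apply: sub_finite_set (finite_poly_roots p_neq0) => t /= tU.
by rewrite /root -scalar_moment_curve fU.
Qed.

Hypothesis F_uncountable : ~ countable [set: F].

Lemma countable_affine_cover (I : countType) (Z : {vspace vT})
    (c : I -> vT) (U : I -> {vspace vT}) :
  (forall x, x \in Z -> exists i, x - c i \in U i) -> exists i, (Z <= U i)%VS.
Proof.
move=> cover; apply: contrapT => /forallNP Z_notin_U; apply: F_uncountable.
pose b : seq vT := vbasis Z.
have fin i : finite_set [set t | moment_curve b t - c i \in U i]%classic.
  have /allPn[v vb vNU] : ~~ all (mem (U i)) b.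
    apply/negP => /allP bU; apply: (Z_notin_U i).
    by rewrite -(span_basis (vbasisP Z)); apply/span_subvP.
  exact: finite_moment_curve_meet vb vNU.
apply: (sub_countable _ (bigcup_countable (countableP [set: I])
  (fun i _ => finite_set_countable (fin i)))).
apply: subset_card_le => t _.
have [i bcU] := cover _ (moment_curve_mem t (fun v => @vbasis_mem _ _ v Z)).
by exists i.
Qed.
End AffineCover.

Definition weyl_word n (rt crt : seq 'rV[int]_n) (s : seq nat) : 'M[C]_n :=
  foldr (fun k w => reflM rt`_k crt`_k *m w) 1%:M s.

Lemma weylP n (rt crt : seq 'rV[int]_n) w :
  weyl rt crt w <->
  exists2 s, all (fun k => k < size rt)%N s & w = weyl_word rt crt s.
Proof.
split=> [|[s s_rt ->]].
  by elim=> [|k w' k_rt _ [s s_rt ->]]; [exists [::] | exists (k :: s); rewrite /= ?k_rt].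
elim: s s_rt => [|k s IHs] /= => [_|/andP[k_rt /IHs]]; first exact: weyl1.
exact: weylS.
Qed.

Lemma dotactD n (rho : 'rV[C]_n) w lam y :
  dotact rho w (lam + y) = dotact rho w lam + y *m w.
Proof. by rewrite /dotact addrAC mulmxDl addrAC. Qed.

Theorem lemma5p3 (n : nat) (rt crt : seq 'rV[int]_n) (D : seq nat)
    (rho : 'rV[C]_n) (m : nat) (mu : nat -> 'rV[C]_n)
    (z : nat -> {vspace 'rV[C]_n}) :
  is_root_datum rt crt ->
  is_base rt D ->
  (forall k, k \in D -> pairC rho (intmx crt`_k) = 1) ->
  (forall x, x \in z 0%N ->
     exists i, (1 <= i <= m)%N /\
       exists w y, [/\ weyl rt crt w, y \in z i & mu 0%N + x = dotact rho w (mu i + y)]) ->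
  exists i0, (1 <= i0 <= m)%N /\
    exists w0, weyl rt crt w0 /\
      forall x, x \in z 0%N -> exists y, y \in z i0 /\ x = y *m w0.
Proof.
move=> _ _ _ cover.
pose I := {p : nat * seq nat | (1 <= p.1 <= m) && all (fun k => k < size rt) p.2}%N.
pose w (p : I) := weyl_word rt crt (val p).2.
pose c (p : I) := dotact rho (w p) (mu (val p).1) - mu 0%N.
pose U (p : I) := (linfun (mulmxr (w p)) @: z (val p).1)%VS.
have [|[[i s] i_s] zU] :=
    countable_affine_cover (@complex_uncountable Rdefinitions.R) (Z := z 0%N) (c := c) (U := U).
  move=> x /cover[i [mi [_ [y [/weylP[s s_rt ->] yz def_x]]]]].
  exists (exist _ (i, s) (introT andP (conj mi s_rt))); set p := exist _ _ _.
  have -> : x = y *m weyl_word rt crt s + c p.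
    by rewrite /c /w /= addrC addrAC -dotactD -def_x addrC addKr.
  by rewrite addrK; apply/memv_imgP; exists y; rewrite ?lfunE.
have /andP[mi s_rt] := i_s.
exists i; split => //; exists (weyl_word rt crt s); split; first by apply/weylP; exists s.
move=> x /(subvP zU) /memv_imgP[y yz ->]; exists y; split => //.
by rewrite lfunE.
Qed.
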